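(* Let $\ell\le L_1$ be positive integers and $L\ge2$. For every $(p,n,L_1)$-multi-labelling $\mathcal M$ of an $L$-graph, $\Delta(\mathcal M)\ge0$.
   Context: An $L$-graph is a single cycle with $2L$ vertices and $2L$ edges whose vertices alternate between ''$n$-vertices'' and ''$p$-vertices'' (so there are $L$ of each). A $(p,n,L_1)$-multi-labelling assigns to each $n$-vertex an $n$-label in $[n]$ and to the $r$-th $p$-vertex ($r=1,\dots,L$) a tuple of $d_r$ $p$-labels in $[p]$, such that: (i) the $n$-label of each $n$-vertex differs from the $n$-labels of the two $n$-vertices immediately preceding and following it in the cycle; (ii) $\ell\le d_r\le L_1$ and the $d_r$ $p$-labels of each tuple are distinct; (iii) for each $n$-label $i$ and $p$-label $j$, the number of edges of the cycle whose $n$-vertex endpoint has label $i$ and whose $p$-vertex endpoint has $j$ in its tuple is either $0$ or at least $2$. Let $r(\mathcal M)$ be the number of distinct $n$-labels and $c(\mathcal M)$ the number of distinct $p$-labels (elements of $[p]$) used. The excess is $\Delta(\mathcal M)=1+\frac L2+\sum_{r=1}^L\frac{d_r}{2\ell}-r(\mathcal M)-\frac{c(\mathcal M)}{\ell}$. *)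

From mathcomp Require Import all_boot all_order all_algebra.
Set Implicit Arguments. Unset Strict Implicit. Unset Printing Implicit Defensive.
Import Order.TTheory GRing.Theory Num.Theory.

(* An L-graph: cycle n_0, p_0, n_1, p_1, ..., n_{L-1}, p_{L-1}, (back to n_0).  Edges: for each r, {n_r, p_r} and {p_r, n_{r+1 mod L}}.
   n-labels are in 'I_n (= [n] shifted by one), p-labels in 'I_p.
   A multi-labelling is given by a : 'I_L -> 'I_n (n-labels of n-vertices) and
   b : 'I_L -> seq 'I_p (the tuple of p-labels of the r-th p-vertex). *)

Definition edge_count (n p L : nat) (a : 'I_L -> 'I_n) (b : 'I_L -> seq 'I_p)
    (i : 'I_n) (j : 'I_p) : nat :=
  \sum_(r < L) (((a r == i) && (j \in b r)) + ((a (ordS r) == i) && (j \in b r))).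

Definition is_multilabelling (p n L1 ell L : nat)
    (a : 'I_L -> 'I_n) (b : 'I_L -> seq 'I_p) : Prop :=
  (forall r : 'I_L, a r != a (ord_pred r) /\ a r != a (ordS r)) /\
  (forall r : 'I_L, (ell <= size (b r) <= L1)%N /\ uniq (b r)) /\
  (forall (i : 'I_n) (j : 'I_p), edge_count a b i j = 0%N \/ (2 <= edge_count a b i j)%N).

Definition r_of (n L : nat) (a : 'I_L -> 'I_n) : nat := #|[set a r | r : 'I_L]|.

Definition c_of (p L : nat) (b : 'I_L -> seq 'I_p) : nat :=
  #|[set j : 'I_p | [exists r : 'I_L, j \in b r]]|.

Local Open Scope ring_scope.

Definition excess (p n ell L : nat) (a : 'I_L -> 'I_n) (b : 'I_L -> seq 'I_p) : rat :=
  1 + (L%:R / 2) + (\sum_(r < L) (size (b r))%:R / (2 * ell%:R))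
    - (r_of a)%:R - (c_of b)%:R / ell%:R.

From mathcomp Require Import all_boot all_order all_algebra.
From mathcomp Require Import ring lra zify.
Set Implicit Arguments. Unset Strict Implicit. Unset Printing Implicit Defensive.
Import Order.TTheory GRing.Theory Num.Theory.
Local Open Scope ring_scope.

(* Read the n-labels around the cycle as a closed walk of length L through r
   distinct vertices, its k-th edge joining the n-vertices on either side of
   the k-th p-vertex.  The edges can be given weights u_k in [0, 1] of total at
   most 2 (L + 1 - r) such that every nonempty sub-multigraph without vertices
   of degree 1 weighs at least 2.  This goes by induction on L: if 2 r <= L + 2,
   all weights 1 will do; otherwise some vertex v is visited only once, as
   x v y, and is cut out of the walk, together with one copy of x when x = y
   (the two new edges weigh 1), or else by merging its two edges into xy (each
   weighs half of xy).
   By condition (iii) the edges whose p-vertex carries a given p-label form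
   such a sub-multigraph, so summing over the c used p-labels gives
   2 c <= sum_k d_k u_k, and d_k >= ell turns this into
   ell (2 r - 2 - L) <= sum_k d_k - 2 c, which is Delta >= 0. *)

Section ClosedWalk.

Variable V : eqType.
Implicit Types (x y v : V) (s t u : seq V) (e : V * V) (es : seq (V * V)) (m : bitseq).

Definition walk_edges s : seq (V * V) := zip s (rot 1 s).

Definition loopless s := all (fun e : V * V => e.1 != e.2) (walk_edges s).

Definition nverts s := size (undup s).

Definition degree es v := (\sum_(e <- es) ((e.1 == v) + (e.2 == v)))%N.

Definition leafless es := forall v, degree es v != 1%N.

Lemma size_walk_edges s : size (walk_edges s) = size s.
Proof. by rewrite size1_zip ?size_rot. Qed.

Lemma walk_edges_cons x s : walk_edges (x :: s) = zip (x :: s) (rcons s x).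
Proof. by rewrite /walk_edges rot1_cons. Qed.

Lemma walk_edges_rot1 s : walk_edges (rot 1 s) = rot 1 (walk_edges s).
Proof.
case: s => [|x [|y s]] //; rewrite rot1_cons !walk_edges_cons.
by rewrite -rcons_cons zip_rcons ?size_rcons //= rot1_cons.
Qed.

Lemma walk_edges_rot k s : walk_edges (rot k s) = rot k (walk_edges s).
Proof.
elim: k => [|k IH]; first by rewrite !rot0.
have [lt_ks|le_sk] := ltnP k (size s).
  by rewrite rotS // walk_edges_rot1 IH -rotS ?size_walk_edges.
by rewrite !rot_oversize ?size_walk_edges // (leq_trans le_sk).
Qed.

Lemma loopless_rot k s : loopless (rot k s) = loopless s.
Proof. by rewrite /loopless walk_edges_rot; apply: perm_all; rewrite perm_rot. Qed.

Lemma nverts_rot k s : nverts (rot k s) = nverts s.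
Proof. exact/perm_size/perm_undup/mem_rot. Qed.

Lemma nverts_cons x s : nverts (x :: s) = ((x \notin s) + nverts s)%N.
Proof. by rewrite /nverts /=; case: (x \in s). Qed.

Lemma nverts_cons2 x v s :
  v \notin x :: s -> nverts [:: x, v & s] = (nverts (x :: s)).+1.
Proof.
rewrite inE negb_or => /andP [vx vs].
by rewrite !nverts_cons inE negb_or eq_sym vx vs /= add1n addnS.
Qed.

Lemma size_sum_count s : size s = (\sum_(v <- undup s) count_mem v s)%N.
Proof.
rewrite -sum1_size -big_undup_iterop_count; apply: eq_bigr => v _.
by rewrite Monoid.iteropE iter_addn_0 mul1n.
Qed.

Lemma nverts_double_le_size s :
  {in s, forall v, count_mem v s != 1%N} -> (2 * nverts s <= size s)%N.
Proof.
move=> no_single; rewrite size_sum_count /nverts -sum1_size big_distrr /= big_seq.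
rewrite [X in (_ <= X)%N]big_seq; apply: leq_sum => v; rewrite mem_undup => vs.
have : (0 < count_mem v s)%N by rewrite -has_count has_pred1.
by move: (no_single v vs); case: (count_mem v s) => [|[|]].
Qed.

Lemma rot_pendant s v : v \in s -> (2 < size s)%N ->
  exists x y u, rotr 1 (rot (index v s) s) = [:: x, v, y & u].
Proof.
move=> vs; rewrite -(size_rot (index v s)) (rot_index vs).
case: (_ ++ _) => [|y t] //; case/lastP: t => [|u x] // _.
by exists x, y, u; rewrite -!rcons_cons rotr1_rcons.
Qed.

Lemma degree_cons e es v :
  degree (e :: es) v = ((e.1 == v) + (e.2 == v) + degree es v)%N.
Proof. by rewrite /degree big_cons. Qed.

Lemma degree_rot k es v : degree (rot k es) v = degree es v.
Proof. by apply: perm_big; rewrite perm_rot. Qed.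

Lemma degree_mask_le m es v : (degree (mask m es) v <= degree es v)%N.
Proof.
elim: es m => [|e es IH] [|[] m] //=; rewrite ?degree_cons ?leq_add2l //.
- by rewrite /degree big_nil.
- exact: leq_trans (IH m) (leq_addl _ _).
Qed.

Lemma degree_zip s t v : size s = size t ->
  degree (zip s t) v = (count_mem v s + count_mem v t)%N.
Proof.
elim: s t => [|x s IH] [|y t] //=; first by rewrite /degree big_nil.
by case=> st; rewrite degree_cons IH // addnACA.
Qed.

Lemma degree_walk_edges s v : degree (walk_edges s) v = (count_mem v s).*2.
Proof.
rewrite degree_zip ?size_rot // -addnn.
by congr addn; apply/permP; rewrite perm_rot.
Qed.

Lemma leafless_size2 es : all (fun e : V * V => e.1 != e.2) es ->
  es != [::] -> leafless es -> (2 <= size es)%N.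
Proof.
case: es => [|e [|e' es]] //= /andP [ne _] _ /(_ e.1).
by rewrite degree_cons /degree big_nil eqxx [e.2 == _]eq_sym (negbTE ne).
Qed.

Lemma leafless_pendant x v y es b1 b2 m : x != v -> y != v ->
  degree (mask m es) v = 0%N ->
  leafless (mask [:: b1, b2 & m] [:: (x, v), (v, y) & es]) -> b1 = b2.
Proof.
move=> xv yv es_v /(_ v); case: b1; case: b2 => //=;
by rewrite !degree_cons es_v /= eqxx ?(negbTE xv) ?(negbTE yv).
Qed.

Variable R : realFieldType.
Implicit Types (w : R) (us : seq R).

Definition leafless_cover es us := forall m, size m = size es ->
  mask m es != [::] -> leafless (mask m es) -> 2 <= \sum_(w <- mask m us) w.

(* [size s + 1 - nverts s] is the cycle rank of the multigraph traced by [s]. *)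
Definition good_weighting s us := [/\ size us = size s,
  all (fun w => 0 <= w <= 1) us,
  \sum_(w <- us) w <= 2 * ((size s)%:R + 1 - (nverts s)%:R)
  & leafless_cover (walk_edges s) us].

Lemma leafless_cover_rot k es us : size us = size es ->
  leafless_cover es us -> leafless_cover (rot k es) (rot k us).
Proof.
move=> size_us cover m; rewrite size_rot => size_m.
rewrite -(rotrK k m) !mask_rot ?size_rotr ?size_m ?size_us //.
rewrite -size_eq0 size_rot size_eq0 => ne leafl.
rewrite (perm_big (mask (rotr k m) us)) ?perm_rot //.
apply: cover; rewrite ?size_rotr // => v; have := leafl v; by rewrite degree_rot.
Qed.

Lemma good_weighting_rot k s us :
  good_weighting s us -> good_weighting (rot k s) (rot k us).
Proof.
case=> size_us bounds sum_us cover; split.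
- by rewrite !size_rot.
- by rewrite (perm_all _ (_ : perm_eq _ us)) ?perm_rot.
- by rewrite (perm_big us) ?perm_rot // size_rot nverts_rot.
- by rewrite walk_edges_rot; apply: leafless_cover_rot; rewrite ?size_walk_edges.
Qed.

Lemma good_weighting_unrot k s us :
  good_weighting (rot k s) us -> good_weighting s (rotr k us).
Proof.
move=> gw; have [size_us _ _ _] := gw.
have := good_weighting_rot (size (rot k s) - k) gw.
by rewrite (rotK k s : rot _ (rot k s) = s) /rotr size_us.
Qed.

Lemma sum_ones us : all (pred1 1) us -> \sum_(w <- us) w = (size us)%:R.
Proof. by move=> /all_pred1P ->; rewrite big_nseq iter_addr_0 size_nseq. Qed.

Lemma good_weighting_ones s : loopless s -> (2 * nverts s <= size s + 2)%N ->
  good_weighting s (nseq (size s) 1).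
Proof.
move=> loopl dense.
have ones : all (pred1 1) (nseq (size s) (1 : R)).
  by rewrite all_nseq /= eqxx orbT.
split.
- exact: size_nseq.
- by rewrite all_nseq ler01 lexx orbT.
- rewrite sum_ones // size_nseq.
  have : (2 * nverts s)%:R <= (size s + 2)%:R :> R by rewrite ler_nat.
  rewrite natrM natrD; lra.
- move=> m size_m ne leafl; rewrite sum_ones ?all_mask //.
  rewrite size_mask ?size_nseq -?size_walk_edges //.
  rewrite -(size_mask size_m) (ler_nat _ 2).
  exact: leafless_size2 (all_mask _ loopl) ne leafl.
Qed.

Lemma leafless_cover_spike x v es us : x != v -> degree es v = 0%N ->
  all (fun w => 0 <= w) us -> leafless_cover es us ->
  leafless_cover [:: (x, v), (v, x) & es] [:: 1, 1 & us].
Proof.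
move=> xv es_v us_ge0 cover [|b1 [|b2 m]] //= [size_m] ne leafl.
have mask_v : degree (mask m es) v = 0%N.
  by apply/eqP; rewrite -leqn0 -es_v degree_mask_le.
have b12 := leafless_pendant xv xv mask_v leafl; subst b2.
case: b1 ne leafl => /= ne leafl; last exact: cover.
rewrite !big_cons addrA -[2]/(1 + 1) lerDl big_seq sumr_ge0 // => w.
by move=> /mem_mask /(allP us_ge0).
Qed.

Lemma leafless_cover_merge x v y es w us : x != v -> y != v ->
  degree es v = 0%N -> leafless_cover ((x, y) :: es) (w :: us) ->
  leafless_cover [:: (x, v), (v, y) & es] [:: w / 2, w / 2 & us].
Proof.
move=> xv yv es_v cover [|b1 [|b2 m]] //= [size_m] ne leafl.
have mask_v : degree (mask m es) v = 0%N.
  by apply/eqP; rewrite -leqn0 -es_v degree_mask_le.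
have b12 := leafless_pendant xv yv mask_v leafl; subst b2.
case: b1 ne leafl => /= ne leafl.
  2: by apply: (cover (false :: m)); rewrite /= ?size_m.
have : 2 <= \sum_(w' <- w :: mask m us) w'.
  apply: (cover (true :: m)) => /=; rewrite ?size_m // => z.
  have := leafl z; rewrite !degree_cons /=.
  case: (eqVneq v z) => [<-|vz]; first by rewrite mask_v (negbTE xv) (negbTE yv).
  by rewrite addn0 add0n addnA.
rewrite !big_cons => ?; lra.
Qed.

Lemma good_weighting_spike x v u us : v \notin x :: u ->
  good_weighting (x :: u) us -> good_weighting [:: x, v, x & u] [:: 1, 1 & us].
Proof.
move=> vxu [size_us bounds sum_us cover].
have xv : x != v by apply: contraNneq vxu => ->; rewrite mem_head.
have nverts_new : nverts [:: x, v, x & u] = (nverts (x :: u)).+1.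
  rewrite nverts_cons2; last by move: vxu; rewrite !inE orbA orbb.
  by rewrite nverts_cons mem_head.
split.
- by rewrite /= size_us.
- by rewrite /= bounds ler01 lexx.
- by move: sum_us; rewrite !big_cons nverts_new /= -!natr1; lra.
- rewrite walk_edges_cons /= -walk_edges_cons.
  apply: leafless_cover_spike => //.
  + by rewrite degree_walk_edges (count_memPn vxu).
  + by apply: sub_all bounds => w /andP [].
Qed.

Lemma good_weighting_merge x v y u w us : v \notin [:: x, y & u] ->
  good_weighting [:: x, y & u] (w :: us) ->
  good_weighting [:: x, v, y & u] [:: w / 2, w / 2 & us].
Proof.
move=> vxyu [size_us bounds sum_us cover].
move: (vxyu); rewrite !inE !negb_or => /and3P [vx vy vu].
split.
- by move: size_us => /= [->].
- move: bounds => /= /andP [/andP [w_ge0 w_le1] ->].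
  by rewrite andbT andbb; apply/andP; split; lra.
- move: sum_us; rewrite !big_cons (nverts_cons2 vxyu) -[(nverts _).+1%:R]natr1.
  by rewrite -[(size [:: x, y & u]).+1%:R]natr1; lra.
- move: cover; rewrite !walk_edges_cons /=.
  apply: leafless_cover_merge; rewrite 1?eq_sym //.
  have vyu : v \notin y :: u by rewrite inE negb_or vy.
  have vux : v \notin rcons u x by rewrite mem_rcons inE negb_or vx.
  by rewrite degree_zip ?size_rcons // (count_memPn vyu) (count_memPn vux).
Qed.

Lemma exists_good_weighting s : loopless s -> exists us, good_weighting s us.
Proof.
have [n] := ubnP (size s); elim: n s => // n IH s /ltnSE size_s loopl.
have [dense|sparse] := leqP (2 * nverts s) (size s + 2).
  by exists (nseq (size s) 1); apply: good_weighting_ones.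
have /hasP [v vs /eqP v1] : has (fun v => count_mem v s == 1%N) s.
  apply: contraLR sparse => /hasPn no_single; rewrite -leqNgt.
  by apply: leq_trans (nverts_double_le_size no_single) (leq_addr _ _).
have [|x [y [u e]]] := rot_pendant vs.
  by move: sparse (size_undup s); rewrite /nverts; lia.
have size_xvyu : size [:: x, v, y & u] = size s by rewrite -e size_rotr size_rot.
have loopl_xvyu : loopless [:: x, v, y & u] by rewrite -e /rotr !loopless_rot.
have vxyu : v \notin [:: x, y & u].
  apply/count_memPn; have : count_mem v [:: x, v, y & u] = 1%N.
    by rewrite -e -v1; apply/permP; rewrite perm_rotr perm_rot.
  by rewrite /= eqxx; lia.
suff [us gw] : exists us, good_weighting [:: x, v, y & u] us.
  exists (rotr (index v s) (rot 1 us)); apply: good_weighting_unrot.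
  by have := good_weighting_rot 1 gw; rewrite -e rotrK.
move: loopl_xvyu; rewrite /loopless walk_edges_cons /=.
case/and3P=> xv vy loopl_rest.
have [exy|xy] := eqVneq x y.
  subst y; have lt_xu : (size (x :: u) < n)%N.
    by rewrite (leq_trans _ size_s) // -size_xvyu.
  have loopl_xu : loopless (x :: u) by rewrite /loopless walk_edges_cons.
  have [us gw] := IH _ lt_xu loopl_xu.
  exists [:: 1, 1 & us]; apply: good_weighting_spike => //.
  by move: vxyu; rewrite !inE orbA orbb.
have lt_xyu : (size [:: x, y & u] < n)%N.
  by rewrite (leq_trans _ size_s) // -size_xvyu.
have loopl_xyu : loopless [:: x, y & u] by rewrite /loopless walk_edges_cons /= xy.
have [[|w us] gw] := IH _ lt_xyu loopl_xyu; first by case: gw.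
by exists [:: w / 2, w / 2 & us]; apply: good_weighting_merge.
Qed.

End ClosedWalk.

Lemma rot1_enum_ord L : rot 1 (enum 'I_L) = map (@ordS L) (enum 'I_L).
Proof.
case: L => [|L]; first by rewrite enum_ord0.
rewrite {1}enum_ordSl enum_ordSr rot1_cons map_rcons -map_comp; congr rcons.
  by apply: eq_map => i; apply: val_inj; rewrite /= /bump add1n modn_small ?ltnS.
by apply: val_inj; rewrite /= modnn.
Qed.

Lemma walk_edges_enum (V : eqType) L (f : 'I_L -> V) :
  walk_edges (map f (enum 'I_L)) = [seq (f k, f (ordS k)) | k <- enum 'I_L].
Proof. by rewrite /walk_edges -map_rot rot1_enum_ord -map_comp zip_map. Qed.

Lemma nverts_enum (T V : finType) (f : T -> V) :
  nverts (map f (enum T)) = #|[set f x | x : T]|.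
Proof.
rewrite imset_card /nverts -(card_uniqP (undup_uniq _)).
by apply: eq_card => y; rewrite mem_undup.
Qed.

Lemma degree_label_edges p n L (a : 'I_L -> 'I_n) (b : 'I_L -> seq 'I_p) i j :
  degree [seq (a k, a (ordS k)) | k <- enum 'I_L & j \in b k] i =
  edge_count a b i j.
Proof.
rewrite /degree big_map big_filter big_enum_cond /edge_count big_mkcond /=.
by apply: eq_bigr => k _; case: (j \in b k); rewrite ?andbT ?andbF.
Qed.

Lemma label_weight_ge2 (R : realFieldType) p n L (a : 'I_L -> 'I_n)
    (b : 'I_L -> seq 'I_p) (u : 'I_L -> R) j :
  (forall i, edge_count a b i j != 1%N) ->
  leafless_cover [seq (a k, a (ordS k)) | k <- enum 'I_L]
                 [seq u k | k <- enum 'I_L] ->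
  (exists k, j \in b k) -> 2 <= \sum_(k < L | j \in b k) u k.
Proof.
move=> no_leaf cover [k0 jk0].
have := cover [seq j \in b k | k <- enum 'I_L].
rewrite -(map_mask (fun k => (a k, a (ordS k)))) -(map_mask u) -filter_mask.
rewrite big_map big_filter big_enum_cond; apply; first by rewrite !size_map.
  rewrite -size_eq0 size_map size_filter -lt0n -has_count.
  by apply/hasP; exists k0; rewrite ?mem_enum.
by move=> i; rewrite degree_label_edges.
Qed.

Lemma sum_labels (R : nzRingType) p L (b : 'I_L -> seq 'I_p) (F : 'I_L -> R) :
  (forall k, uniq (b k)) ->
  \sum_(j < p) \sum_(k < L | j \in b k) F k = \sum_(k < L) (size (b k))%:R * F k.
Proof.
move=> uniq_b; rewrite (exchange_big_dep xpredT) //=; apply: eq_bigr => k _.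
by rewrite sumr_const (card_uniqP (uniq_b k)) mulr_natl.
Qed.

Lemma excess_ge0 p n ell L (a : 'I_L -> 'I_n) (b : 'I_L -> seq 'I_p)
    (u : 'I_L -> rat) :
  (0 < ell)%N -> (forall k, ell <= size (b k))%N -> (forall k, uniq (b k)) ->
  (forall k, u k <= 1) -> \sum_(k < L) u k <= 2 * (L%:R + 1 - (r_of a)%:R) ->
  (forall j, (exists k, j \in b k) -> 2 <= \sum_(k < L | j \in b k) u k) ->
  0 <= excess ell a b.
Proof.
move=> ell_gt0 ell_le uniq_b u_le1 sum_u label_u.
set D := \sum_(k < L) ((size (b k))%:R : rat).
set W := \sum_(k < L) (size (b k))%:R * u k.
have labels_W : 2 * (c_of b)%:R <= W.
  rewrite /W -sum_labels // (bigID (fun j => [exists k, j \in b k])) /=.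
  rewrite [X in _ + X]big1 ?addr0 => [|j]; last first.
    rewrite negb_exists => /forallP unused.
    by rewrite big_pred0 // => k; apply/negbTE.
  rewrite /c_of -sum1_card natr_sum mulr_sumr big_mkcond [leRHS]big_mkcond.
  apply: ler_sum => j _; rewrite inE; case: ifP => // /existsP used.
  by rewrite mulr1 label_u.
have W_le : ell%:R * (L%:R - \sum_(k < L) u k) <= D - W.
  have -> : L%:R - \sum_(k < L) u k = \sum_(k < L) (1 - u k).
    by rewrite sumrB sumr_const card_ord.
  rewrite mulr_sumr /D /W -sumrB; apply: ler_sum => k _.
  by rewrite -[X in _ <= X - _]mulr1 -mulrBr ler_wpM2r ?subr_ge0 ?ler_nat.
have ell_pos : 0 < ell%:R :> rat by rewrite ltr0n.
have := ler_wpM2l (ltW ell_pos) sum_u.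
have -> : excess ell a b = (D - 2 * (c_of b)%:R
    - ell%:R * (2 * (r_of a)%:R - 2 - L%:R)) / (2 * ell%:R).
  by rewrite /excess -mulr_suml -/D; field; rewrite lt0r_neq0.
move=> ?; apply: divr_ge0; last by rewrite mulr_ge0 // ltW.
lra.
Qed.

Theorem lemma3p8 (ell L1 L p n : nat) :
  (0 < ell)%N -> (ell <= L1)%N -> (2 <= L)%N ->
  forall (a : 'I_L -> 'I_n) (b : 'I_L -> seq 'I_p),
    is_multilabelling L1 ell a b ->
    0 <= excess ell a b.
Proof.
move=> ell_gt0 _ _ a b [adjacent [sizes counts]].
have loopl : loopless (map a (enum 'I_L)).
  rewrite /loopless walk_edges_enum all_map.
  by apply/allP => k _; exact: (adjacent k).2.
have [us [size_us bounds sum_us cover]] := exists_good_weighting rat loopl.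
rewrite size_map size_enum_ord in size_us sum_us.
pose u (k : 'I_L) := nth 0 us k.
have us_u : us = [seq u k | k <- enum 'I_L].
  rewrite (map_comp (nth 0 us) val) val_enum_ord -size_us.
  exact/esym/mkseq_nth.
apply: (excess_ge0 (u := u)) => //.
- by move=> k; case: (sizes k) => /andP [].
- by move=> k; case: (sizes k).
- move=> k; have /andP [] // : 0 <= u k <= 1.
  by apply: (allP bounds); rewrite mem_nth // size_us.
- by move: sum_us; rewrite us_u big_map big_enum nverts_enum.
- move=> j used; apply: (label_weight_ge2 (a := a)) => // [i|].
  + by case: (counts i j) => [->|]; last case: (edge_count a b i j) => [|[|]].
  + by rewrite -us_u -walk_edges_enum.
Qed.
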